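(* For all integers $n\geq 1$ and $0\leq m\leq n$, \[ K_q(n,m)=\sum_{w\in\mathcal{K}(m,n-m+1)} q^{\mathrm{inv}(w)}=\sum_{w\in\overline{\mathcal{K}}(m,n-m+1)} q^{\mathrm{maj}(w)}. \]
   Context: For integers $n\ge m\ge 0$ the Gaussian polynomial is ${n\brack m}=\prod_{i=0}^{m-1}\frac{1-q^{n-i}}{1-q^{m-i}}$. For $n\geq 1$ and $0\le m\le n$, the $q$-Kaplansky number is $K_q(n,m)=\frac{1-q^{n+m}}{1-q^{n}}{n\brack m}$ (a polynomial in $q$). For a $(0,1)$-sequence $w=w_1w_2\cdots w_N$, $\mathrm{inv}(w)$ is the number of pairs $i<j$ with $w_i>w_j$, and $\mathrm{maj}(w)$ is the sum of all indices $i<N$ with $w_i>w_{i+1}$. $\mathcal{K}(m,n-m+1)$ is the set of $(0,1)$-sequences $w=w_1\cdots w_{n+1}$ of length $n+1$ with exactly $m$ ones and $n-m+1$ zeros such that if $w_{n+1}=1$ then $w_1=0$. $\overline{\mathcal{K}}(m,n-m+1)$ is the set of $(0,1)$-sequences $w=w_1\cdots w_{n+1}$ with exactly $m$ ones and $n-m+1$ zeros such that if $w_{n+1}=1$, then, letting $t=\max\{i: w_i=0\}$, either $t=1$ or ($t\ge 2$ and $w_{t-1}=0$). *)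

From mathcomp Require Import all_boot all_order all_algebra.
Set Implicit Arguments. Unset Strict Implicit. Unset Printing Implicit Defensive.
Import GRing.Theory.
Local Open Scope ring_scope.

(* Polynomials in q are elements of {poly rat}; q is 'X. *)

(* Gaussian polynomial [n brack m] = prod_{i<m} (1-q^(n-i))/(1-q^(m-i)),
   realised as the (exact) polynomial quotient. *)
Definition gauss (n m : nat) : {poly rat} :=
  (\prod_(i < m) (1 - 'X^(n - i))) %/ (\prod_(i < m) (1 - 'X^(m - i))).

Definition qKap (n m : nat) : {poly rat} :=
  ((1 - 'X^(n + m)) * gauss n m) %/ (1 - 'X^n).

(* (0,1)-sequences: tuples of bools, true = 1, false = 0.
   Positions are 1-based in the paper: w_i = nth false w (i-1). *)
Definition wat (N : nat) (w : N.-tuple bool) (i : nat) : bool :=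
  nth false w i.-1.

Definition invw (N : nat) (w : N.-tuple bool) : nat :=
  \sum_(1 <= i < N.+1) \sum_(i.+1 <= j < N.+1) ((wat w i && ~~ wat w j) : nat).

Definition majw (N : nat) (w : N.-tuple bool) : nat :=
  \sum_(1 <= i < N) (if wat w i && ~~ wat w i.+1 then i else 0%N).

Definition nones (N : nat) (w : N.-tuple bool) : nat := count id w.

(* K(m, n-m+1): length n+1, m ones (hence n-m+1 zeros), w_{n+1}=1 -> w_1=0 *)
Definition Kset (n m : nat) (w : n.+1.-tuple bool) : bool :=
(nones w == m) && (wat w n.+1 ==> ~~ wat w 1).

(* largest index of a zero (0 if none) *)
Definition lastzero (N : nat) (w : N.-tuple bool) : nat :=
  \max_(1 <= i < N.+1 | ~~ wat w i) i.

Definition Kbarset (n m : nat) (w : n.+1.-tuple bool) : bool :=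
(nones w == m) &&
    (wat w n.+1 ==>
       ((lastzero w == 1%N) || ((2 <= lastzero w)%N && ~~ wat w (lastzero w).-1))).
Arguments Kset n m w : clear implicits.
Arguments Kbarset n m w : clear implicits.

(* Both sides are generating functions of binary words of length n+1 with m ones.
   Appending a letter gives q-Pascal recursions, so over all such words both inv and
   maj have generating function the Gaussian binomial [n+1, m].  The words excluded by
   the side conditions contribute q^(n+1-m) [n-1, m-2] in both cases: for inv they are
   the words 1u1, with inv(1u1) = #zeros(u) + inv(u); for maj they are the words ending
   in 1 whose last zero (if any) follows a one, counted by a recursion on the last
   letter.  Finally K_q(n,m) = [n+1, m] - q^(n+1-m) [n-1, m-2] is an identity between
   Gaussian binomials. *)

From mathcomp Require Import all_boot all_order all_algebra zify ring.
Import GRing.Theory.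
Set Implicit Arguments.
Unset Strict Implicit.
Unset Printing Implicit Defensive.
Local Open Scope ring_scope.

Fixpoint qbin (N m : nat) : {poly rat} :=
  match N, m with
  | _, 0 => 1
  | 0, _.+1 => 0
  | N'.+1, m'.+1 => qbin N' m' + 'X^(m'.+1) * qbin N' m'.+1
  end.

Lemma qbinn0 N : qbin N 0 = 1. Proof. by case: N. Qed.

Lemma qbinS N m : qbin N.+1 m.+1 = qbin N m + 'X^(m.+1) * qbin N m.+1.
Proof. by []. Qed.

Lemma qbin_small N m : (N < m)%N -> qbin N m = 0.
Proof.
elim: N m => [|N IH] [|m] //= ltNm.
by rewrite !IH ?mulr0 ?addr0 // ltnW.
Qed.

Lemma qbinS_dual N m : qbin N.+1 m.+1 = qbin N m.+1 + 'X^(N - m) * qbin N m.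
Proof.
elim: N m => [|N IH] [|m].
- by rewrite qbinS !qbinn0 qbin_small // mulr0 expr0 mul1r addr0 add0r.
- by rewrite !qbin_small ?mulr0 ?addr0.
- by rewrite qbinS {1}(IH 0%N) qbinS !qbinn0 !subn0 !exprS expr0; ring.
rewrite [qbin N.+1 m.+2]qbinS [qbin N.+1 m.+1]qbinS qbinS (IH m) (IH m.+1) subSS.
have [ltmN | leNm] := ltnP m N.
  by rewrite -(subnSK ltmN) !exprS; ring.
by rewrite (qbin_small (leNm : (N < m.+1)%N)); ring.
Qed.

Lemma mul_qbin_diag N m :
  (1 - 'X^(m.+1)) * qbin N.+1 m.+1 = (1 - 'X^(N.+1)) * qbin N m.
Proof.
have [lemN | ltNm] := leqP m N; last by rewrite !qbin_small ?mulr0.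
have -> : 'X^(N.+1) = 'X^(m.+1) * 'X^(N - m) :> {poly rat}.
  by rewrite -exprD addSn subnKC.
by rewrite mulrBl mul1r {1}qbinS qbinS_dual; ring.
Qed.

Lemma mul_qbin_down N m :
  (1 - 'X^(N - m)) * qbin N.+1 m.+1 = (1 - 'X^(N.+1)) * qbin N m.+1.
Proof.
have [lemN | ltNm] := leqP m N; last first.
  rewrite (qbin_small (ltNm : (N.+1 < m.+1)%N)).
  by rewrite (qbin_small (ltnW ltNm : (N < m.+1)%N)) !mulr0.
have -> : 'X^(N.+1) = 'X^(N - m) * 'X^(m.+1) :> {poly rat}.
  by rewrite -exprD addnS subnK.
by rewrite mulrBl mul1r {1}qbinS_dual qbinS; ring.
Qed.

Lemma oneBXn_neq0 k : (0 < k)%N -> 1 - 'X^k != 0 :> {poly rat}.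
Proof.
move=> k_gt0; apply/eqP => /(congr1 (horner^~ 0)).
by rewrite !hornerE expr0n eqn0Ngt k_gt0 subr0 => /eqP; rewrite oner_eq0.
Qed.

Lemma qbin_Kaplansky N m : (m <= N)%N ->
  (1 - 'X^(N.+1)) * (qbin N.+2 m.+2 - 'X^(N - m) * qbin N m)
  = (1 - 'X^(N.+1 + m.+2)) * qbin N.+1 m.+2.
Proof.
move=> lemN; apply: (mulIf (oneBXn_neq0 (ltn0Sn N.+1))).
have low : (1 - 'X^(N.+2)) * ((1 - 'X^(N.+1)) * qbin N m)
    = (1 - 'X^(m.+1)) * ((1 - 'X^(m.+2)) * qbin N.+2 m.+2).
  by rewrite -(mul_qbin_diag N m) (mul_qbin_diag N.+1 m.+1); ring.
have high := mul_qbin_down N.+1 m.+1; rewrite subSS in high.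
transitivity ((1 - 'X^(N.+1)) * (1 - 'X^(N.+2)) * qbin N.+2 m.+2
    - 'X^(N - m) * ((1 - 'X^(N.+2)) * ((1 - 'X^(N.+1)) * qbin N m))).
  by ring.
transitivity ((1 - 'X^(N.+1 + m.+2)) * ((1 - 'X^(N - m)) * qbin N.+2 m.+2)).
  by rewrite low -(subnKC lemN) addKn !(exprS, exprD); ring.
by rewrite high; ring.
Qed.

Definition qfalling (n m : nat) : {poly rat} := \prod_(i < m) (1 - 'X^(n - i)).

Lemma qfallingSS n m : qfalling n.+1 m.+1 = (1 - 'X^(n.+1)) * qfalling n m.
Proof. by rewrite /qfalling big_ord_recl subn0. Qed.

Lemma qfallingnn_neq0 m : qfalling m m != 0.
Proof.
elim: m => [|m IH]; first by rewrite /qfalling big_ord0 oner_neq0.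
by rewrite qfallingSS mulf_neq0 ?oneBXn_neq0.
Qed.

Lemma qfalling_qbin n m : qfalling m m * qbin n m = qfalling n m.
Proof.
elim: n m => [|n IH] [|m]; try by rewrite qbinn0 mulr1 /qfalling !big_ord0.
  by rewrite qbin_small // mulr0 /qfalling big_ord_recl subrr mul0r.
by rewrite !qfallingSS -IH mulrAC mul_qbin_diag; ring.
Qed.

Lemma gauss_qbin n m : gauss n m = qbin n m.
Proof.
by rewrite /gauss -!/(qfalling _ _) -qfalling_qbin mulrC mulpK // qfallingnn_neq0.
Qed.

(* The generating function of the words excluded from K(m, n-m+1), resp. Kbar. *)
Definition qKap_excess (n m : nat) : {poly rat} :=
  if m is m'.+2 then 'X^(n.+1 - m) * qbin n.-1 m' else 0.

Lemma qKap_qbin n m : (1 <= n)%N -> (m <= n)%N ->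
  qKap n m = qbin n.+1 m - qKap_excess n m.
Proof.
move=> n_gt0 lemn; rewrite /qKap gauss_qbin.
suff -> : (1 - 'X^(n + m)) * qbin n m = (qbin n.+1 m - qKap_excess n m) * (1 - 'X^n).
  by rewrite mulpK ?oneBXn_neq0.
rewrite /qKap_excess; case: m lemn => [|[|m]] lemn.
- by rewrite !qbinn0 subr0 addn0 mulr1 mul1r.
- by rewrite subr0 addn1 -(mul_qbin_down n 0) subn0 mulrC.
case: n n_gt0 lemn => [|N] // _ lemN.
by rewrite !subSS [RHS]mulrC qbin_Kaplansky // ltnW.
Qed.

Fixpoint wsum (N : nat) (F : seq bool -> {poly rat}) : {poly rat} :=
  if N is N'.+1 then wsum N' (fun s => F (false :: s)) + wsum N' (fun s => F (true :: s))
  else F [::].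

Lemma eq_wsum N F G : (forall s, size s = N -> F s = G s) -> wsum N F = wsum N G.
Proof.
elim: N F G => [|N IH] F G eqFG /=; first exact: eqFG.
by congr (_ + _); apply: IH => s size_s; apply: eqFG; rewrite /= size_s.
Qed.

Lemma wsum_eq0 N F : (forall s, size s = N -> F s = 0) -> wsum N F = 0.
Proof.
elim: N F => [|N IH] F F0 /=; first exact: F0.
by rewrite !IH ?addr0 // => s size_s; apply: F0; rewrite /= size_s.
Qed.

Lemma wsumD N F G : wsum N (fun s => F s + G s) = wsum N F + wsum N G.
Proof. by elim: N F G => [|N IH] F G //=; rewrite !IH addrACA. Qed.

Lemma wsumB N F G : wsum N (fun s => F s - G s) = wsum N F - wsum N G.
Proof. by elim: N F G => [|N IH] F G //=; rewrite !IH opprD addrACA. Qed.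

Lemma wsumMl N c F : wsum N (fun s => c * F s) = c * wsum N F.
Proof. by elim: N F => [|N IH] F //=; rewrite !IH mulrDr. Qed.

Lemma wsumS N F :
  wsum N.+1 F = wsum N (fun s => F (false :: s)) + wsum N (fun s => F (true :: s)).
Proof. by []. Qed.

Lemma wsum_rcons N F : wsum N.+1 F =
  wsum N (fun s => F (rcons s false)) + wsum N (fun s => F (rcons s true)).
Proof.
elim: N F => [|N IH] F //.
transitivity (wsum N.+1 (fun s => F (false :: s)) + wsum N.+1 (fun s => F (true :: s))).
  by [].
by rewrite (IH (fun s => F (false :: s))) (IH (fun s => F (true :: s))) addrACA.
Qed.

Lemma sum_tuple_wsum N F : \sum_(w : N.-tuple bool) F (tval w) = wsum N F.
Proof.
elim: N F => [|N IH] F /=.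
  rewrite (eq_bigr (fun _ => F [::])) => [|w _]; last by rewrite tuple0.
  by rewrite sumr_const card_tuple.
rewrite (reindex (fun p : bool * N.-tuple bool => [tuple of p.1 :: p.2])) /=; last first.
  exists (fun w : N.+1.-tuple bool => (thead w, [tuple of behead w])).
    by case=> b w _; congr pair; apply: val_inj.
  by move=> w _; rewrite [in RHS](tuple_eta w).
rewrite -(pair_big xpredT xpredT (fun b (w : N.-tuple bool) => F (b :: tval w))) /=.
by rewrite big_bool addrC (IH (fun s => F (false :: s))) (IH (fun s => F (true :: s))).
Qed.

(* inv_seq, maj_seq and lastzero_seq are invw, majw and lastzero on plain sequences;
   on tuples they are convertible to the originals. *)
Definition inv_seq (N : nat) (s : seq bool) : nat :=
  \sum_(1 <= i < N.+1) \sum_(i.+1 <= j < N.+1)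
    ((nth false s i.-1 && ~~ nth false s j.-1) : nat).

Fixpoint inv_rec (s : seq bool) : nat :=
  if s is b :: s' then ((if b then count negb s' else 0) + inv_rec s')%N else 0%N.

Lemma sum_nth_count (P : pred bool) s :
  (\sum_(1 <= j < (size s).+1) P (nth false s j.-1))%N = count P s.
Proof.
rewrite big_add1 /=; elim: s => [|x s IH]; first by rewrite big_geq.
by rewrite big_nat_recl //= -IH.
Qed.

Lemma inv_seq_cons b s :
  inv_seq (size s).+1 (b :: s)
  = ((if b then count negb s else 0) + inv_seq (size s) s)%N.
Proof.
rewrite /inv_seq big_nat_recl //; congr addn.
  rewrite big_add1; case: b; last by rewrite big1.
  by rewrite -(sum_nth_count negb); apply: eq_big_nat => -[].
apply: eq_big_nat => i /andP[i_gt0 _]; rewrite big_add1.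
by apply: eq_big_nat => j /andP[j_gt_i _]; case: i i_gt0 j_gt_i => // i; case: j.
Qed.

Lemma inv_seq_rec s : inv_seq (size s) s = inv_rec s.
Proof.
elim: s => [|b s IH]; first by rewrite /inv_seq big_geq.
by rewrite [LHS]inv_seq_cons IH.
Qed.

Lemma count_rcons (T : Type) (a : pred T) s x :
  count a (rcons s x) = (count a s + a x)%N.
Proof. by rewrite -cats1 count_cat /= addn0. Qed.

Lemma inv_rec_rcons s b :
  inv_rec (rcons s b) = (inv_rec s + (if b then 0 else count id s))%N.
Proof.
elim: s => [|x s IH] /=; first by case: b.
by rewrite {}IH count_rcons; case: x; case: b => /=; lia.
Qed.

Definition inv_gf (N m : nat) :=
  wsum N (fun s => if count id s == m then 'X^(inv_rec s) else 0).

Lemma inv_gf_qbin N m : inv_gf N m = qbin N m.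
Proof.
elim: N m => [|N IH] m; first by rewrite /inv_gf; case: m.
rewrite /inv_gf wsum_rcons.
have -> : wsum N (fun s => if count id (rcons s false) == m
                          then 'X^(inv_rec (rcons s false)) else 0) = 'X^m * inv_gf N m.
  rewrite -wsumMl; apply: eq_wsum => s _; rewrite count_rcons inv_rec_rcons addn0.
  by case: eqP => [->|_]; rewrite ?mulr0 // exprD mulrC.
rewrite IH; case: m => [|m].
  rewrite wsum_eq0 => [|s _]; last by rewrite count_rcons addn1.
  by rewrite !qbinn0 expr0 mulr1 addr0.
rewrite (@eq_wsum _ _ (fun s => if count id s == m then 'X^(inv_rec s) else 0)).
  by rewrite -/(inv_gf N m) IH qbinS addrC.
by move=> s _; rewrite count_rcons inv_rec_rcons addn1 addn0 eqSS.
Qed.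

Lemma inv_gf_ends1 (n m : nat) :
  wsum n.+2 (fun s => if [&& count id s == m, head false s & last false s]
                      then 'X^(inv_rec s) else 0) = qKap_excess n.+1 m.
Proof.
rewrite wsumS wsum_eq0 ?add0r => [|s _]; last by rewrite /= andbF.
rewrite wsum_rcons wsum_eq0 ?add0r => [|s _]; last by rewrite /= last_rcons !andbF.
case: m => [|[|k]];
  try by rewrite wsum_eq0 // => s _; rewrite /= last_rcons count_rcons addn1.
rewrite /qKap_excess !subSS -(inv_gf_qbin n k) /inv_gf -wsumMl.
apply: eq_wsum => s size_s; rewrite /= last_rcons count_rcons addn1 !eqSS andbT.
case: eqP => [count_s | _]; last by rewrite mulr0.
rewrite inv_rec_rcons count_rcons !addn0 -exprD; congr ('X^_).
by have : (count id s + count negb s = size s)%N := count_predC id s; lia.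
Qed.

Definition Kseq (n m : nat) (s : seq bool) : bool :=
  (count id s == m) && (nth false s n ==> ~~ nth false s 0).

Lemma wsum_Kseq_inv (n m : nat) : (1 <= n)%N ->
  wsum n.+1 (fun s => if Kseq n m s then 'X^(inv_seq n.+1 s) else 0)
  = qbin n.+1 m - qKap_excess n m.
Proof.
case: n => [|n] // _; rewrite -inv_gf_qbin -inv_gf_ends1 -wsumB.
apply: eq_wsum => s size_s; rewrite /Kseq -size_s inv_seq_rec -nth_last size_s.
case: s size_s => [|b s] // _ /=.
by case: (_ == m); case: b; case: (nth _ _ _); rewrite ?subr0 ?subrr.
Qed.

Definition maj_seq (N : nat) (s : seq bool) : nat :=
  \sum_(1 <= i < N) (if nth false s i.-1 && ~~ nth false s i then i else 0%N).

Definition lastzero_seq (N : nat) (s : seq bool) : nat :=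
  \max_(1 <= i < N.+1 | ~~ nth false s i.-1) i.

(* A word without zeros has lastzero_seq 0, so it is not guarded. *)
Definition lastzero_guarded (N : nat) (s : seq bool) : bool :=
  (lastzero_seq N s == 1%N)
  || ((2 <= lastzero_seq N s)%N && ~~ nth false s (lastzero_seq N s).-2).

Lemma maj_seq_rcons N s b : size s = N ->
  maj_seq N.+1 (rcons s b) = (maj_seq N s + (if last false s && ~~ b then N else 0))%N.
Proof.
case: N => [|N] size_s; first by rewrite (size0nil size_s) /maj_seq !big_geq.
rewrite /maj_seq big_nat_recr //= !nth_rcons size_s ltnn eqxx ltnSn -nth_last size_s.
congr addn.
apply: eq_big_nat => i /andP[i_gt0 ltiN]; rewrite !nth_rcons size_s ltiN.
by case: i i_gt0 ltiN => // i _ /ltnW ->.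
Qed.

Lemma lastzero_seq_le N s : (lastzero_seq N s <= N)%N.
Proof. by apply/bigmax_leqP_seq => i; rewrite mem_index_iota ltnS => /andP[]. Qed.

Lemma lastzero_seq_rcons N s b : size s = N ->
  lastzero_seq N.+1 (rcons s b) = if b then lastzero_seq N s else N.+1.
Proof.
move=> size_s; rewrite /lastzero_seq big_mkcond big_nat_recr //=.
rewrite nth_rcons size_s ltnn eqxx.
rewrite (@eq_big_nat _ _ _ _ _ _ (fun i => if ~~ nth false s i.-1 then i else 0%N)).
  rewrite -big_mkcond; case: b => /=; first by rewrite maxn0.
  by apply/maxn_idPr; rewrite leqW // lastzero_seq_le.
move=> i /andP[i_gt0 leiN]; rewrite nth_rcons size_s.
by case: i i_gt0 leiN => // i _; rewrite ltnS => ->.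
Qed.

Lemma lastzero_guarded_rcons1 N s : size s = N ->
  lastzero_guarded N.+1 (rcons s true) = lastzero_guarded N s.
Proof.
move=> size_s; rewrite /lastzero_guarded lastzero_seq_rcons //.
have := lastzero_seq_le N s; case: (lastzero_seq N s) => [|[|t]] //= ltN.
by rewrite nth_rcons size_s ltnW.
Qed.

Lemma lastzero_guarded_rcons0 N s : size s = N ->
  lastzero_guarded N.+1 (rcons s false) = ~~ last false s.
Proof.
move=> size_s; rewrite /lastzero_guarded lastzero_seq_rcons //.
case: N size_s => [|N] size_s; first by rewrite (size0nil size_s).
by rewrite /= nth_rcons size_s ltnSn -nth_last size_s.
Qed.

Definition maj_gf (N m : nat) :=
  wsum N (fun s => if count id s == m then 'X^(maj_seq N s) else 0).

Definition maj_gf_end (b : bool) (N m : nat) :=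
  wsum N (fun s => if (count id s == m) && (last false s == b)
                   then 'X^(maj_seq N s) else 0).

Lemma maj_gf_split N m : maj_gf N m = maj_gf_end false N m + maj_gf_end true N m.
Proof.
rewrite -wsumD; apply: eq_wsum => s _.
by case: (_ == m); case: (last _ _); rewrite ?addr0 ?add0r.
Qed.

Lemma maj_gf_end1S N m :
  maj_gf_end true N.+1 m = if m is m'.+1 then maj_gf N m' else 0.
Proof.
rewrite /maj_gf_end wsum_rcons wsum_eq0 ?add0r => [|s _]; last first.
  by rewrite last_rcons andbF.
case: m => [|m]; first by rewrite wsum_eq0 // => s _; rewrite count_rcons addn1.
apply: eq_wsum => s size_s.
by rewrite count_rcons addn1 eqSS last_rcons andbT maj_seq_rcons // andbF addn0.
Qed.

Lemma maj_gf_end0S N m :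
  maj_gf_end false N.+1 m = maj_gf_end false N m + 'X^N * maj_gf_end true N m.
Proof.
rewrite /maj_gf_end wsum_rcons [X in _ + X]wsum_eq0 ?addr0 => [|s _]; last first.
  by rewrite last_rcons andbF.
rewrite -wsumMl -wsumD; apply: eq_wsum => s size_s.
rewrite count_rcons addn0 last_rcons andbT maj_seq_rcons // andbT.
case: (_ == m); case: (last _ _); rewrite /= ?addn0 ?mulr0 ?addr0 ?add0r //.
by rewrite exprD mulrC.
Qed.

Lemma maj_gf_qbin_end0 N :
  (forall m, maj_gf N m = qbin N m)
  /\ (forall m, maj_gf_end false N.+1 m = 'X^m * qbin N m).
Proof.
have end00 m : maj_gf_end false 0 m = qbin 0 m.
  by rewrite /maj_gf_end /= /maj_seq big_geq // andbT; case: m.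
have end10 m : maj_gf_end true 0 m = 0 by rewrite /maj_gf_end /= andbF.
elim: N => [|N [IHgf IHend0]].
  split=> m; first by rewrite maj_gf_split end00 end10 addr0.
  rewrite maj_gf_end0S end00 end10 mulr0 addr0.
  by case: m => [|m]; rewrite ?mulr1 ?mulr0.
have gfS m : maj_gf N.+1 m = qbin N.+1 m.
  rewrite maj_gf_split IHend0 maj_gf_end1S.
  by case: m => [|m]; rewrite ?qbinn0 ?expr0 ?mulr1 ?addr0 // IHgf qbinS addrC.
split=> // m; rewrite maj_gf_end0S IHend0 maj_gf_end1S.
case: m => [|m]; first by rewrite !qbinn0 mulr0 addr0.
rewrite IHgf qbinS_dual mulrDr mulrA -exprD.
have [lemN | ltNm] := leqP m N; last by rewrite (qbin_small ltNm) !mulr0.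
by rewrite addSn subnKC.
Qed.

Lemma maj_gf_qbin N m : maj_gf N m = qbin N m.
Proof. by case: (maj_gf_qbin_end0 N) => ->. Qed.

Definition maj_gf_unguarded (b : bool) (N m : nat) :=
  wsum N (fun s => if [&& count id s == m, last false s == b & ~~ lastzero_guarded N s]
                   then 'X^(maj_seq N s) else 0).

Lemma maj_gf_unguarded1S N m :
  maj_gf_unguarded true N.+1 m =
  if m is m'.+1 then maj_gf_unguarded true N m' + maj_gf_unguarded false N m' else 0.
Proof.
rewrite /maj_gf_unguarded wsum_rcons wsum_eq0 ?add0r => [|s _]; last first.
  by rewrite last_rcons andbF.
case: m => [|m]; first by rewrite wsum_eq0 // => s _; rewrite count_rcons addn1.
rewrite -wsumD; apply: eq_wsum => s size_s.
rewrite count_rcons addn1 eqSS last_rcons maj_seq_rcons // andbF addn0.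
rewrite lastzero_guarded_rcons1 //.
by case: (_ == m); case: (last _ _); case: (lastzero_guarded _ _);
  rewrite /= ?addr0 ?add0r.
Qed.

Lemma maj_gf_unguarded0S N m :
  maj_gf_unguarded false N.+1 m = 'X^N * maj_gf_end true N m.
Proof.
rewrite /maj_gf_unguarded wsum_rcons [X in _ + X]wsum_eq0 ?addr0 => [|s _]; last first.
  by rewrite last_rcons andbF.
rewrite -wsumMl; apply: eq_wsum => s size_s.
rewrite count_rcons addn0 last_rcons maj_seq_rcons // lastzero_guarded_rcons0 // negbK.
by case: (_ == m); case: (last _ _); rewrite /= ?mulr0 // exprD mulrC.
Qed.

Lemma maj_gf_unguarded_excess n m :
  maj_gf_unguarded true n.+2 m = qKap_excess n.+1 m.
Proof.
have end1_0 k : maj_gf_end true 0 k = 0 by rewrite /maj_gf_end /= andbF.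
elim: n m => [|n IH] m; rewrite maj_gf_unguarded1S; case: m => [|m] //.
all: rewrite maj_gf_unguarded0S.
  rewrite end1_0 mulr0 addr0 maj_gf_unguarded1S; case: m => [|m] //.
  rewrite /maj_gf_unguarded /= /lastzero_guarded /lastzero_seq /maj_seq !big_geq //.
  by case: m => [|m]; rewrite /= ?expr0 ?mulr1 ?mulr0 ?add0r ?addr0.
rewrite IH maj_gf_end1S; case: m => [|m]; first by rewrite mulr0 addr0.
rewrite maj_gf_qbin /qKap_excess; case: m => [|m] /=; first by rewrite !qbinn0 add0r.
rewrite !subSS mulrDr mulrA -exprD.
have [lemn | ltnm] := leqP m n; first by rewrite addnS subnK.
by rewrite !qbin_small ?mulr0 ?addr0 // ltnW.
Qed.

Definition Kbarseq (n m : nat) (s : seq bool) : bool :=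
  (count id s == m) && (nth false s n ==> lastzero_guarded n.+1 s).

Lemma wsum_Kbarseq_maj (n m : nat) : (1 <= n)%N ->
  wsum n.+1 (fun s => if Kbarseq n m s then 'X^(maj_seq n.+1 s) else 0)
  = qbin n.+1 m - qKap_excess n m.
Proof.
case: n => [|n] // _; rewrite -maj_gf_qbin -maj_gf_unguarded_excess -wsumB.
apply: eq_wsum => s size_s; rewrite /Kbarseq -nth_last size_s /=.
by case: (_ == m); case: (nth _ _ _); case: (lastzero_guarded _ _);
  rewrite ?subr0 ?subrr.
Qed.

Theorem theorem1p1 (n m : nat) :
  (1 <= n)%N -> (m <= n)%N ->
  qKap n m = \sum_(w : n.+1.-tuple bool | Kset n m w) 'X^(invw w)
  /\ qKap n m = \sum_(w : n.+1.-tuple bool | Kbarset n m w) 'X^(majw w).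
Proof.
move=> n_gt0 lemn; rewrite qKap_qbin //; split.
  rewrite -(wsum_Kseq_inv m n_gt0) -sum_tuple_wsum [RHS]big_mkcond; exact: eq_bigr.
rewrite -(wsum_Kbarseq_maj m n_gt0) -sum_tuple_wsum [RHS]big_mkcond; exact: eq_bigr.
Qed.
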